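(* Let $P$ be the uniform probability measure on $[0,1]$, $Q$ a probability measure on $[0,1]$ with unimodal density $r = dQ/dP$, maximiser $x^*$ and $r_{max} = \sup r<\infty$. Let $B_1, B_2,\dots$ be the bounds produced by AS* and $Z_n = P(B_n)$. Then for every $\gamma\in[0,1]$ and $n \ge 1$, $$\mathbb{P}(Z_n \ge w(\gamma)) \le \frac{1}{w(\gamma)}\left(\frac{3}{4}\right)^{n-1}.$$
   Context: Unimodal: $r$ non-decreasing on $[0,x^*]$, non-increasing on $[x^*,1]$, $r(x^* ) = r_{max}$. $S(\gamma) = \{x\in[0,1] : r(x)\ge\gamma r_{max}\}$ and $w(\gamma) = \inf\{\delta\in[0,1] : \exists z\in[0,1],\ S(\gamma)\subseteq[z,z+\delta]\}$. $\mathrm{TG}(\mu,\kappa)$ is the unit-scale Gumbel with location $\mu$ truncated to $(-\infty,\kappa]$ (density $\propto \exp(-(g-\mu)-e^{-(g-\mu)})$ on $g\le\kappa$). AS*: $B_1=[0,1]$, $G_0=+\infty$; for every $n\ge1$ draw $G_n\sim\mathrm{TG}(\log P(B_n),G_{n-1})$ and independently $X_n\sim P(\cdot\cap B_n)/P(B_n)$; set $L_n=\max_{k\le n}(\log r(X_k)+G_k)$, $U_n=\log r_{max}+G_n$, and $B_{n+1}=[\max(\{0\}\cup\{X_k:k\le n,X_k\le x^*\}),\ \min(\{1\}\cup\{X_k:k\le n,X_k\ge x^*\})]$. These sequences are defined for all $n$; the algorithm's number of steps is $T=\min\{n\ge1: L_n\ge U_n\}$. *)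

From HB Require Import structures.
From mathcomp Require Import all_boot all_order all_algebra.
From mathcomp Require Import all_classical all_reals all_analysis.
Set Implicit Arguments. Unset Strict Implicit. Unset Printing Implicit Defensive.
Import Order.TTheory GRing.Theory Num.Theory.
Import numFieldNormedType.Exports.
Local Open Scope classical_set_scope.
Local Open Scope ring_scope.

Definition unimodal (R : realType) (r : R -> R) (xs : R) : Prop :=
  [/\ 0 <= xs <= 1,
      (forall x y, 0 <= x -> x <= y -> y <= xs -> r x <= r y) &
      (forall x y, xs <= x -> x <= y -> y <= 1 -> r y <= r x)].

Definition Sset (R : realType) (r : R -> R) (rmax gamma : R) : set R :=
  [set x | 0 <= x <= 1 /\ gamma * rmax <= r x].

Definition wdth (R : realType) (r : R -> R) (rmax gamma : R) : R :=
  inf [set d : R | 0 <= d <= 1 /\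
        exists z : R, 0 <= z <= 1 /\ Sset r rmax gamma `<=` `[z, z + d]].

Definition mutually_independent (d : measure_display) (T : measurableType d)
  (R : realType) (P0 : probability T R) (W : nat -> T -> R) : Prop :=
  forall (s : seq nat) (A : nat -> set R), uniq s ->
    (forall i, measurable (A i)) ->
    P0 (\bigcap_(i in [set` s]) (W i @^-1` A i)) =
    (\prod_(i <- s) P0 (W i @^-1` A i))%E.

Definition uniform01 (d : measure_display) (T : measurableType d)
  (R : realType) (P0 : probability T R) (Y : T -> R) : Prop :=
  measurable_fun setT Y /\
  forall A : set R, measurable A ->
    P0 (Y @^-1` A) = (@lebesgue_measure R) (A `&` `[0%R, 1%R]).

(* The bound process of AS*, driven by the uniforms u : nat -> R.
   Internally 0-indexed: bnd xs u k = B_{k+1} = [a, b] (as pair (a,b)),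
   and Xs xs u k = X_{k+1} = a + (b - a) * u k, which is uniform on B_{k+1}
   (= P(. ∩ B_{k+1}) / P(B_{k+1}) for P uniform on [0,1]) when u k is uniform.
   B_{n+1} = [max({0} ∪ {X_k : k<=n, X_k <= x*}), min({1} ∪ {X_k : k<=n, X_k >= x*})]
   is computed incrementally. *)
Fixpoint bnd (R : realType) (xs : R) (u : nat -> R) (k : nat) : R * R :=
  match k with
  | 0 => (0, 1)
  | k'.+1 =>
      let ab := bnd xs u k' in
      let x := ab.1 + (ab.2 - ab.1) * u k' in
      (if x <= xs then Num.max ab.1 x else ab.1,
       if xs <= x then Num.min ab.2 x else ab.2)
  end.

Definition Xs (R : realType) (xs : R) (u : nat -> R) (k : nat) : R :=
  let ab := bnd xs u k in ab.1 + (ab.2 - ab.1) * u k.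

(* Z_n = P(B_n) (Lebesgue length of B_n), for n >= 1. *)
Definition Zn (R : realType) (xs : R) (u : nat -> R) (n : nat) : R :=
  let ab := bnd xs u n.-1 in ab.2 - ab.1.

From HB Require Import structures.
From mathcomp Require Import all_boot all_order all_algebra.
From mathcomp Require Import all_classical all_reals all_analysis.
From mathcomp Require Import measurable_realfun measurable_fun_approximation.
From mathcomp Require Import ring lra zify.
Import Order.TTheory GRing.Theory Num.Theory.
Import numFieldNormedType.Exports.

Set Implicit Arguments.
Unset Strict Implicit.
Unset Printing Implicit Defensive.

Local Open Scope classical_set_scope.
Local Open Scope ring_scope.

(* Every bound B_n = [a, b] of AS* contains x*, and the next proposal a + (b - a) U_n
   cuts it to a sub-interval of length at most (b - a) max(U_n, 1 - U_n).  Hence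
   Z_n <= prod_{i < n-1} max(U_i, 1 - U_i), and Markov's inequality together with
   independence bounds P(Z_n >= w) by E[max(U, 1 - U)]^(n-1) / w = (3/4)^(n-1) / w.
   To work with events only, E[max(U, 1 - U)] is replaced by the upper Riemann sum
   [cell_avg K] of max(x, 1 - x) over K equal cells, which is at most 3/4 + 1/(2K):
   the Markov bound with [cell_avg K] follows by induction on the number of factors,
   splitting on the cell containing each U_i, and K -> oo gives the claim. *)

Definition max_compl (R : realType) (x : R) : R := Num.max x (1 - x).

Lemma max_compl_ge0 (R : realType) (x : R) : 0 <= max_compl x.
Proof. by rewrite /max_compl le_max subr_ge0; case: (leP 0 x) => //= x_lt0; lra. Qed.

Lemma shrink_step (R : realType) (xs a b v : R) : a <= xs <= b -> 0 <= v <= 1 ->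
  let X := a + (b - a) * v in
  let a' := if X <= xs then Num.max a X else a in
  let b' := if xs <= X then Num.min b X else b in
  a' <= xs <= b' /\ b' - a' <= (b - a) * max_compl v.
Proof.
move=> /andP[axs xsb] /andP[v0 v1] X a' b'.
have ba0 : 0 <= b - a by lra.
have aX : a <= X by rewrite /X; nra.
have Xb : X <= b by rewrite /X; nra.
have [vm v1m] : v <= max_compl v /\ 1 - v <= max_compl v by rewrite !le_max !lexx orbT.
rewrite /a' /b'; case: (lerP X xs) => Xxs; case: (lerP xs X) => xsX /=.
- have -> : X = xs by apply/eqP; rewrite eq_le Xxs xsX.
  rewrite max_r ?min_r ?lexx //; nra.
- by rewrite max_r // Xxs xsb /X; nra.
- by rewrite min_r // axs xsX /X; nra.
- lra.
Qed.

Lemma bnd_width_le (R : realType) (xs : R) (u : nat -> R) (k : nat) :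
  0 <= xs <= 1 -> (forall i, (i < k)%N -> 0 <= u i <= 1) ->
  (bnd xs u k).1 <= xs <= (bnd xs u k).2 /\
  (bnd xs u k).2 - (bnd xs u k).1 <= \prod_(0 <= i < k) max_compl (u i).
Proof.
move=> xs01; elim: k => [|k IH] u01; first by rewrite big_geq //=; lra.
have [ab_xs ab_width] := IH (fun i ltik => u01 i (ltnW ltik)).
have [ab'_xs ab'_width] := shrink_step ab_xs (u01 k (ltnSn k)).
split=> //; apply: le_trans ab'_width _.
by rewrite big_nat_recr //= ler_wpM2r ?max_compl_ge0.
Qed.

Definition sum_cell_maxn (K : nat) : nat := \sum_(0 <= j < K) maxn j.+1 (K - j).

Lemma sum_cell_maxnSS (K : nat) :
  sum_cell_maxn K.+2 = (sum_cell_maxn K + 3 * K + 4)%N.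
Proof.
rewrite /sum_cell_maxn big_nat_recl // big_nat_recr //=.
have -> : \sum_(0 <= j < K) maxn j.+2 (K.+2 - j.+1) =
          (\sum_(0 <= j < K) maxn j.+1 (K - j) + K)%N.
  transitivity (\sum_(0 <= j < K) (maxn j.+1 (K - j) + 1)%N).
    by apply: eq_big_nat => j /andP[_ ltjK]; rewrite !maxnE; lia.
  by rewrite big_split /= sum_nat_const_nat subn0 muln1.
rewrite !maxnE; lia.
Qed.

Lemma sum_cell_maxn_le (K : nat) : (4 * sum_cell_maxn K <= 3 * (K * K) + 2 * K)%N.
Proof.
suff: (4 * sum_cell_maxn K <= 3 * (K * K) + 2 * K)%N /\
      (4 * sum_cell_maxn K.+1 <= 3 * (K.+1 * K.+1) + 2 * K.+1)%N by case.
elim: K => [|K [IHK IHK1]]; first by rewrite /sum_cell_maxn big_geq // big_nat1.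
by split=> //; rewrite sum_cell_maxnSS; lia.
Qed.

Section Cells.
Variable R : realType.

Definition cell_max (K j : nat) : R := Num.max (j.+1%:R / K%:R) (1 - j%:R / K%:R).

Definition cell_avg (K : nat) : R := (\sum_(j < K) cell_max K j) / K%:R.

Lemma cell_max_gt0 (K j : nat) : (0 < K)%N -> 0 < cell_max K j.
Proof. by move=> K0; rewrite lt_max divr_gt0 ?ltr0n. Qed.

Lemma cell_avg_ge0 (K : nat) : (0 < K)%N -> 0 <= cell_avg K.
Proof.
move=> K0; rewrite divr_ge0 ?ler0n // sumr_ge0 // => j _.
exact/ltW/cell_max_gt0.
Qed.

Lemma cell_max_nat (K j : nat) : (j < K)%N ->
  cell_max K j = (maxn j.+1 (K - j))%:R / K%:R.
Proof.
move=> ltjK; have K0 : 0 < K%:R :> R by rewrite ltr0n; lia.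
rewrite /cell_max -maxEnat natr_max [RHS]mulrC maxr_pMr ?invr_ge0 ?ler0n //.
by rewrite natrB; [congr (Num.max _ _); field; lra | lia].
Qed.

Lemma cell_avg_le (K : nat) : (0 < K)%N -> cell_avg K <= 3 / 4 + 1 / (2 * K%:R).
Proof.
move=> K0; have K0' : 0 < K%:R :> R by rewrite ltr0n.
have -> : cell_avg K = (sum_cell_maxn K)%:R / (K%:R * K%:R).
  rewrite /cell_avg /sum_cell_maxn natr_sum big_mkord invfM mulrA; congr (_ * _).
  by rewrite mulr_suml; apply: eq_bigr => j _; rewrite cell_max_nat.
have := sum_cell_maxn_le K; rewrite -(ler_nat R) !(natrD, natrM).
rewrite ler_pdivrMr ?mulr_gt0 //; move: (sum_cell_maxn K)%:R => S.
have -> : (3 / 4 + 1 / (2 * K%:R)) * (K%:R * K%:R) = (3 * (K%:R * K%:R) + 2 * K%:R) / 4 :> R.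
  by field; lra.
rewrite ler_pdivlMr; last by lra.
by rewrite mulrC.
Qed.

Lemma sum_cell_weights (K : nat) (x c : R) : (0 < K)%N -> c != 0 ->
  \sum_(j < K) 1 / K%:R * (x / (c / cell_max K j)) = x * cell_avg K / c.
Proof.
move=> K0 c0; have K0' : K%:R != 0 :> R by rewrite pnatr_eq0 -lt0n.
transitivity (\sum_(j < K) x / c / K%:R * cell_max K j).
  by apply: eq_bigr => j _; field; rewrite K0' c0 gt_eqF ?cell_max_gt0.
by rewrite -mulr_sumr /cell_avg; field; rewrite c0 K0'.
Qed.

End Cells.

Definition cell (R : realType) (K j : nat) : set R := `[j%:R / K%:R, j.+1%:R / K%:R].

Lemma exists_cell (R : realType) (K : nat) (u : R) : (0 < K)%N -> 0 <= u <= 1 ->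
  exists2 j, (j < K)%N & cell K j u.
Proof.
move=> K0 /andP[u0 u1]; have K0' : 0 < K%:R :> R by rewrite ltr0n.
have /andP[tr_le lt_tr] := truncn_itv (mulr_ge0 u0 (ltW K0')).
have [ltK|geK] := ltnP (Num.truncn (u * K%:R)) K.
  exists (Num.truncn (u * K%:R)) => //.
  by rewrite /cell /= in_itv /= ler_pdivrMr // ler_pdivlMr // tr_le (ltW lt_tr).
have u_eq1 : u = 1.
  apply/eqP; rewrite eq_le u1 -(ler_pM2r K0') mul1r.
  by apply: le_trans tr_le; rewrite ler_nat.
exists K.-1; first by rewrite prednK.
rewrite /cell /= in_itv /= prednK // u_eq1 divff ?gt_eqF //.
by rewrite lexx andbT ler_pdivrMr // mul1r ler_nat leq_pred.
Qed.

Lemma max_compl_le_cell_max (R : realType) (K j : nat) (u : R) :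
  cell K j u -> max_compl u <= cell_max R K j.
Proof.
rewrite /cell /= in_itv /= => /andP[lo hi].
rewrite /max_compl /cell_max ge_max !le_max hi /=; apply/orP; right; lra.
Qed.

Lemma exprD_le_add_mul (R : realFieldType) (a e : R) (N : nat) :
  0 <= a -> 0 <= e -> a + e <= 1 -> (a + e) ^+ N <= a ^+ N + N%:R * e.
Proof.
move=> a0 e0 ae1; elim: N => [|N IH]; first by rewrite !expr0 mul0r addr0.
have aN1 : a ^+ N <= 1 by rewrite exprn_ile1 //; lra.
have aN0 : 0 <= a ^+ N by rewrite exprn_ge0.
have NE0 : 0 <= N%:R * e by rewrite mulr_ge0 ?ler0n.
have := ler_wpM2l (_ : 0 <= a + e) IH; rewrite !exprS -natr1; nra.
Qed.

Lemma ler_mul_3_4_expn (R : realType) (x y : R) (N : nat) : 0 <= y ->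
  (forall K, (2 <= K)%N -> x <= y * cell_avg R K ^+ N) -> x <= y * (3 / 4) ^+ N.
Proof.
move=> y0 xle; apply/ler_addgt0Pr => eps eps0.
pose K := (Num.truncn (y * N%:R / eps)).+2.
have K0 : 0 < K%:R :> R by rewrite ltr0n.
have lt_K : y * N%:R / eps < K%:R.
  by rewrite (lt_le_trans (truncnS_gt _)) // ler_nat.
have K2 : (2 <= K)%N by [].
pose e := 1 / (2 * K%:R) : R.
have e0 : 0 <= e by rewrite divr_ge0 // mulr_ge0 ?ler0n.
have e_small : e <= 1 / 4.
  rewrite ler_pdivrMr ?mulr_gt0 //.
  have : 2%:R <= K%:R :> R by rewrite ler_nat.
  lra.
have yNe : y * N%:R * e <= eps.
  move: lt_K; rewrite ltr_pdivrMr // /e div1r ler_pdivrMr ?mulr_gt0 //; nra.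
have qKN : cell_avg R K ^+ N <= (3 / 4) ^+ N + N%:R * e.
  have q_le : cell_avg R K <= 3 / 4 + e by exact: cell_avg_le.
  apply: le_trans (@exprD_le_add_mul _ (3 / 4) e N ltac:(lra) e0 ltac:(lra)).
  by rewrite lerXn2r ?nnegrE ?cell_avg_ge0 //; lra.
apply: (le_trans (xle K K2)); rewrite -lerBlDr.
by have := ler_wpM2l y0 qKN; nra.
Qed.

Definition joint_event d (T : measurableType d) (R : realType) (U : nat -> T -> R)
  (t : seq nat) (A : nat -> set R) : set T :=
  \bigcap_(i in [set` t]) (U i @^-1` A i).

Definition large_prod_event d (T : measurableType d) (R : realType) (U : nat -> T -> R)
  (s : seq nat) (c : R) : set T :=
  [set om | (forall i, i \in s -> 0 <= U i om <= 1) /\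
            c <= \prod_(i <- s) max_compl (U i om)].

Lemma uniform01_cell d (T : measurableType d) (R : realType) (P0 : probability T R)
  (Y : T -> R) (K j : nat) : (j < K)%N -> uniform01 P0 Y ->
  P0 (Y @^-1` cell K j) = (1 / K%:R)%:E.
Proof.
move=> ltjK [_ PY]; have K0 : 0 < K%:R :> R by rewrite ltr0n; lia.
have cell_sub : cell K j `<=` (`[0, 1] : set R).
  move=> x; rewrite /cell /= !in_itv /= => /andP[lo hi].
  rewrite (le_trans _ lo) ?divr_ge0 ?ler0n //=.
  by rewrite (le_trans hi) // ler_pdivrMr // mul1r ler_nat.
rewrite PY ?setIidl ?lebesgue_measure_itv //=; last exact: measurable_itv.
rewrite lte_fin ltr_pM2r ?invr_gt0 // ltr_nat ltnSn -EFinB -mulrBl.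
by rewrite -natrB // subSnn.
Qed.

Lemma uniform01_unit d (T : measurableType d) (R : realType) (P0 : probability T R)
  (Y : T -> R) : uniform01 P0 Y -> P0 (Y @^-1` `[0, 1]) = 1%E.
Proof.
move=> [_ PY]; rewrite PY ?setIid ?lebesgue_measure_itv; last exact: measurable_itv.
by rewrite /= lte_fin ltr01 -EFinB subr0.
Qed.

Lemma cell_update_measurable (R : realType) (A : nat -> set R) (k K j : nat) :
  (forall i, measurable (A i)) -> forall i, measurable ([eta A with k |-> cell K j] i).
Proof. by move=> mA i /=; case: eqP => _; [exact: measurable_itv | exact: mA]. Qed.

Section LargeProduct.
Variables (d : measure_display) (T : measurableType d) (R : realType).
Variables (P0 : probability T R) (U : nat -> T -> R).
Hypothesis hU : forall i, uniform01 P0 (U i).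
Hypothesis hind : mutually_independent P0 U.

Let mU i : measurable_fun setT (U i) := (hU i).1.

Lemma joint_event_measurable t A : (forall i, measurable (A i)) ->
  measurable (joint_event U t A).
Proof.
move=> mA; apply: fin_bigcap_measurable; first exact: finite_seq.
by move=> i _; rewrite -[_ @^-1` _]setTI; exact: mU.
Qed.

Lemma large_prod_event_measurable s c : measurable (large_prod_event U s c).
Proof.
have -> : large_prod_event U s c = joint_event U s (fun=> `[0, 1]%classic) `&`
    ((fun om => \prod_(i <- s) max_compl (U i om)) @^-1` `[c, +oo[%classic).
  apply/seteqP; split=> om /=; rewrite in_itv /= andbT.
    by case=> U01 cle; split=> // i /= si; rewrite in_itv /= U01.
  by case=> U01 cle; split=> // i si; have := U01 i si; rewrite /= in_itv.
apply: measurableI; first exact: joint_event_measurable (fun=> measurable_itv _).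
have mprod : measurable_fun setT (fun om => \prod_(i <- s) max_compl (U i om)).
  by apply: measurable_prod => i _; apply: measurable_maxr => //; exact: measurable_funB.
by rewrite -[_ @^-1` _]setTI; apply: mprod => //; exact: measurable_itv.
Qed.

Lemma prob_joint_large_prod_nil t A c : (forall i, measurable (A i)) -> 0 < c ->
  (P0 (joint_event U t A `&` large_prod_event U [::] c) <=
   P0 (joint_event U t A) * (1 / c)%:E)%E.
Proof.
move=> mA c0; have mE := joint_event_measurable t mA.
have [c_le1|c_gt1] := lerP c 1.
  apply: (@le_trans _ _ (P0 (joint_event U t A))).
    by rewrite le_measure ?inE //; exact: measurableI (large_prod_event_measurable _ _).
  by rewrite lee_pemulr // lee_fin div1r invf_ge1.
rewrite (_ : _ `&` _ = set0) ?measure0 ?mule_ge0 // ?lee_fin ?divr_ge0 ?ltW //.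
by apply/seteqP; split=> om // [_ [_]]; rewrite /= big_nil; lra.
Qed.

Lemma joint_large_prod_cons_subset K k s t A c : (0 < K)%N ->
  joint_event U t A `&` large_prod_event U (k :: s) c `<=`
  \bigcup_(j < K) (joint_event U (k :: t) [eta A with k |-> cell K j] `&`
                   large_prod_event U s (c / cell_max R K j)).
Proof.
move=> K0 om [Eom [U01 cle]].
have [j ltjK cell_j] := exists_cell K0 (U01 k (mem_head _ _)).
exists j => //; split; [|split].
- move=> i /=; rewrite inE => /orP[/eqP->|ti]; first by rewrite eqxx.
  by case: eqP => [->|_]; [exact: cell_j | exact: Eom].
- by move=> i si; apply: U01; rewrite inE si orbT.
- rewrite ler_pdivrMr ?cell_max_gt0 //; apply: le_trans cle _.
  rewrite big_cons mulrC ler_wpM2l ?max_compl_le_cell_max //.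
  by apply: prodr_ge0 => i _; exact: max_compl_ge0.
Qed.

Lemma prob_joint_cons_cell K j k t A : (j < K)%N -> uniq (k :: t) ->
  (forall i, measurable (A i)) ->
  P0 (joint_event U (k :: t) [eta A with k |-> cell K j]) =
  ((1 / K%:R)%:E * P0 (joint_event U t A))%E.
Proof.
move=> ltjK /andP[kt ut] mA; have mA' := cell_update_measurable k K j mA.
rewrite /joint_event !hind //= ?kt // big_cons /= eqxx uniform01_cell //.
congr (_ * _)%E; apply: eq_big_seq => i ti /=; case: eqP => // ik.
by move: kt; rewrite -ik ti.
Qed.

(* The side event on the coordinates t, independent of those in s, is what lets the
   induction condition on the cell of the first coordinate of s. *)
Lemma prob_joint_large_prod_le K : (0 < K)%N ->
  forall s t A c, uniq (s ++ t) -> (forall i, measurable (A i)) -> 0 < c ->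
  (P0 (joint_event U t A `&` large_prod_event U s c) <=
   P0 (joint_event U t A) * (cell_avg R K ^+ size s / c)%:E)%E.
Proof.
move=> K0; elim=> [|k s IH] t A c ust mA c0.
  by rewrite expr0; exact: prob_joint_large_prod_nil.
have ukt : uniq (k :: t).
  by move: ust; rewrite /= cat_uniq mem_cat negb_or => /andP[/andP[_ ->] /and3P[]].
have ust' : uniq (s ++ k :: t).
  by have /permPl skt := perm_catCA s [:: k] t; rewrite (perm_uniq skt).
have mE := joint_event_measurable t mA.
have mAj j := cell_update_measurable k K j mA.
pose F j := joint_event U (k :: t) [eta A with k |-> cell K j] `&`
            large_prod_event U s (c / cell_max R K j).
have mF j : measurable (F j).
  exact: measurableI (joint_event_measurable _ (mAj j)) (large_prod_event_measurable _ _).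
have mEF := measurableI _ _ mE (large_prod_event_measurable (k :: s) c).
apply: le_trans (content_subadditive P0 (fun j _ => mF j) mEF _) _.
  by rewrite -bigcup_mkord; exact: joint_large_prod_cons_subset.
pose e j := 1 / K%:R * (cell_avg R K ^+ size s / (c / cell_max R K j)).
have e_ge0 j : 0 <= e j.
  by rewrite /e mulr_ge0 ?divr_ge0 ?ler0n ?exprn_ge0 ?cell_avg_ge0 ?(ltW c0) ?ltW ?cell_max_gt0.
have PF j : (j < K)%N -> (P0 (F j) <= (e j)%:E * P0 (joint_event U t A))%E.
  move=> ltjK; apply: le_trans (IH _ _ _ ust' (mAj j) _) _.
    by rewrite divr_gt0 ?cell_max_gt0.
  by rewrite prob_joint_cons_cell // muleAC -EFinM.
apply: (@le_trans _ _ (\sum_(j < K) ((e j)%:E * P0 (joint_event U t A)))%E).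
  by apply: lee_sum => j _; exact: PF.
rewrite -ge0_sume_distrl => [|j _]; last by rewrite lee_fin.
by rewrite sumEFin sum_cell_weights ?gt_eqF // -exprSr muleC.
Qed.

Lemma prob_large_prod_le K s c : (0 < K)%N -> uniq s -> 0 < c ->
  (P0 (large_prod_event U s c) <= (cell_avg R K ^+ size s / c)%:E)%E.
Proof.
move=> K0 us c0.
have := prob_joint_large_prod_le K0 (s := s) (t := [::]) (A := fun=> setT) (c := c).
have -> : joint_event U [::] (fun=> setT) = setT by rewrite /joint_event set_nil bigcap_set0.
by rewrite setTI probability_setT mul1e; apply; rewrite ?cats0.
Qed.

Lemma measurable_bnd xs k :
  measurable_fun setT (fun om => (bnd xs (fun i => U i om) k).1) /\
  measurable_fun setT (fun om => (bnd xs (fun i => U i om) k).2).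
Proof.
elim: k => [|k [mlo mhi]] /=; first by split; exact: measurable_cst.
have mX : measurable_fun setT (fun om => (bnd xs (fun i => U i om) k).1 +
    ((bnd xs (fun i => U i om) k).2 - (bnd xs (fun i => U i om) k).1) * U k om).
  by apply: measurable_funD => //; apply: measurable_funM => //; exact: measurable_funB.
have mcst : measurable_fun [set: T] (fun=> xs) by exact: measurable_cst.
split; apply: measurable_fun_ifT => //.
- exact: measurable_fun_ler.
- exact: measurable_maxr.
- exact: measurable_fun_ler.
- exact: measurable_minr.
Qed.

Lemma prob_Zn_ge_le_large_prod xs c n : 0 <= xs <= 1 ->
  (P0 [set om | (c <= Zn xs (fun k => U k om) n)%R] <=
   P0 (large_prod_event U (iota 0 n.-1) c))%E.
Proof.
move=> xs01; set N := n.-1; set Z := fun om => Zn xs (fun k => U k om) n.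
pose G := joint_event U (iota 0 N) (fun=> `[0, 1]%classic).
have mG : measurable G := joint_event_measurable _ (fun=> measurable_itv _).
have PG : P0 G = 1%E.
  rewrite /G hind ?iota_uniq //.
  by rewrite big1_seq // => i _; exact: uniform01_unit.
have mZ : measurable [set om | c <= Z om].
  have [mlo mhi] := measurable_bnd xs N.
  have -> : [set om | c <= Z om] = Z @^-1` `[c, +oo[%classic.
    by apply/seteqP; split=> om; rewrite /= in_itv /= andbT.
  by rewrite -[_ @^-1` _]setTI; apply: measurable_funB => //; exact: measurable_itv.
have mF := large_prod_event_measurable (iota 0 N) c.
have sub : [set om | c <= Z om] `<=` large_prod_event U (iota 0 N) c `|` ~` G.
  move=> om cZ; have [Gom|] := pselect (G om); [left | by right].
  have U01 i : (i < N)%N -> 0 <= U i om <= 1.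
    by move=> iN; have := Gom i; rewrite /= mem_iota /= in_itv; apply.
  have [_ width] := bnd_width_le xs01 U01.
  split; first by move=> i; rewrite mem_iota; exact: U01.
  by move: width; rewrite /index_iota subn0; exact: le_trans.
apply: le_trans (le_measure _ _ _ sub) _; rewrite ?inE //.
  exact: measurableU mF (measurableC mG).
apply: le_trans (measureU2 _ mF (measurableC mG)) _.
have PGc : (P0 (~` G) <= 0)%E by rewrite (probability_setC P0 mG) PG subee.
by apply: le_trans (leeD2l _ PGc) _; rewrite adde0.
Qed.

End LargeProduct.

Lemma wdth_ge0 (R : realType) (r : R -> R) (rmax gamma : R) : 0 <= wdth r rmax gamma.
Proof.
apply: lb_le_inf => [|d [/andP[d0 _] _] //].
exists 1; split; first by rewrite ler01 lexx.
exists 0; split; first by rewrite lexx ler01.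
by move=> x [/andP[x0 x1] _]; rewrite /= in_itv /= add0r x0 x1.
Qed.

Theorem mainTheorem4 (R : realType)
  (Q : probability R R) (r : R -> R) (xs : R)
  (hr0 : forall x, 0 <= x <= 1 -> 0 <= r x)
  (hrm : measurable_fun (`[0%R, 1%R] : set R) r)
  (hQ : forall A : set R, measurable A ->
          Q A = (\int[@lebesgue_measure R]_(x in A `&` `[0%R, 1%R]) (r x)%:E)%E)
  (hunim : unimodal r xs)
  (d : measure_display) (T : measurableType d) (P0 : probability T R)
  (U : nat -> T -> R)
  (hU : forall i, uniform01 P0 (U i))
  (hind : mutually_independent P0 U)
  (gamma : R) (hg : 0 <= gamma <= 1) (n : nat) (hn : (1 <= n)%N) :
  (P0 [set om | (wdth r (r xs) gamma <= Zn xs (fun k => U k om) n)%R]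
   <= (wdth r (r xs) gamma)%:E^-1 * ((3 / 4) ^+ n.-1)%:E)%E.
Proof.
have [xs01 _ _] := hunim.
set w := wdth r (r xs) gamma.
(* In \bar R, [0^-1 = +oo], so the case w = 0 is trivial. *)
have [->|w_neq0] := eqVneq w 0.
  by rewrite inve0 gt0_mulye ?leey // lte_fin exprn_gt0.
have w_gt0 : 0 < w by rewrite lt0r w_neq0 wdth_ge0.
apply: le_trans (prob_Zn_ge_le_large_prod hU hind w n xs01) _.
have mF := large_prod_event_measurable hU (iota 0 n.-1) w.
rewrite inver (negbTE w_neq0) -EFinM -(fineK (fin_num_measure P0 _ mF)) lee_fin.
apply: ler_mul_3_4_expn; first by rewrite invr_ge0 ltW.
move=> K K2; rewrite mulrC -lee_fin fineK ?fin_num_measure //.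
by have := prob_large_prod_le hU hind (ltnW K2) (iota_uniq 0 n.-1) w_gt0; rewrite size_iota.
Qed.
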